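(* Let $x_1, \ldots, x_q \in \mathbb{C}$ and let $r$ be an integer with $1 \leqslant r < q$. Then $$\sum_{s=1}^q (-1)^{s-1} \sum_{1 \leqslant k_1 < \cdots < k_s \leqslant q}\ \sum_{\substack{j_{k_1}, \ldots, j_{k_s} \geqslant 0\\ j_{k_1} + \cdots + j_{k_s} = r}} \binom{2r}{2j_{k_1}, \ldots, 2j_{k_s}} x_{k_1}^{j_{k_1}} \cdots x_{k_s}^{j_{k_s}} = 0,$$ where $\binom{2r}{2j_{k_1}, \ldots, 2j_{k_s}} = \frac{(2r)!}{(2j_{k_1})! \cdots (2j_{k_s})!}$ and the $j$'s are integers. *)

From HB Require Import structures.
From mathcomp Require Import all_boot all_order all_algebra.
From mathcomp Require Import complex.
From mathcomp Require Import Rstruct.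
Set Implicit Arguments. Unset Strict Implicit. Unset Printing Implicit Defensive.
Import Order.TTheory GRing.Theory Num.Theory.

Definition Cplx : Type := (Rdefinitions.R)[i].

From HB Require Import structures.
From mathcomp Require Import all_boot all_order all_algebra.
From mathcomp Require Import complex.
From mathcomp Require Import Rstruct.
Set Implicit Arguments.
Unset Strict Implicit.
Unset Printing Implicit Defensive.
Import Order.TTheory GRing.Theory Num.Theory.
Local Open Scope ring_scope.

(* Exchange the two sums.  A family j = (j_k) with support T contributes to
   exactly the sets S containing T, always with the same coefficient
   (2r)!/prod (2 j_k)! * prod x_k^(j_k).  Since 1 <= |T| <= r < q, T is a
   nonempty proper subset of {1, ..., q}, and the signs (-1)^(|S|-1) over the
   supersets S of T cancel in pairs S, S + {a} for a fixed a outside T. *)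

Section SupersetSigns.

Variables (T : finType) (R : pzRingType).

Lemma sum_supersets_sign (A : {set T}) (a : T) : a \notin A ->
  \sum_(S : {set T} | A \subset S) (-1) ^+ #|S| = 0 :> R.
Proof.
move=> aNA; rewrite (bigID [pred S : {set T} | a \in S]) /=.
pose toggle (S : {set T}) := if a \in S then S :\ a else a |: S.
have toggleK : involutive toggle.
  move=> S; rewrite /toggle; case: (boolP (a \in S)) => aS.
    by rewrite !inE eqxx /= setD1K.
  by rewrite setU11 setU1K.
have toggle_cond S :
    (A \subset toggle S) && (a \in toggle S) = (A \subset S) && (a \notin S).
  rewrite /toggle; case: (boolP (a \in S)) => aS; first by rewrite setD11 !andbF.
  by rewrite setU11 andbT -{2}(setU1K aS) subsetD1 aNA /= !andbT.
rewrite (reindex_inj (inv_inj toggleK)) /= (eq_bigl _ _ toggle_cond).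
rewrite -big_split /= big1 // => S /andP[_ aNS].
by rewrite /toggle (negbTE aNS) cardsU1 aNS add1n exprS mulN1r addNr.
Qed.

Lemma sum_supersets_sign_pred (A : {set T}) (a : T) : a \notin A -> A != set0 ->
  \sum_(S : {set T} | A \subset S) (-1) ^+ #|S|.-1 = 0 :> R.
Proof.
move=> aNA /set0Pn[b bA].
transitivity (- \sum_(S : {set T} | A \subset S) (-1) ^+ #|S| : R).
  rewrite -sumrN; apply: eq_bigr => S AS.
  have : (0 < #|S|)%N by apply/card_gt0P; exists b; apply: (subsetP AS).
  by case: #|S| => // n _; rewrite exprS mulN1r opprK.
by rewrite (sum_supersets_sign aNA) oppr0.
Qed.

End SupersetSigns.

Section NatSupport.

Variable T : finType.

Definition supp (f : T -> nat) : {set T} := [set k | f k != 0%N].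

Lemma forall_notin_eq0E (f : T -> nat) (S : {set T}) :
  [forall k, (k \notin S) ==> (f k == 0%N)] = (supp f \subset S).
Proof.
apply/forallP/subsetP => [fS k | fS k]; rewrite ?inE.
  by apply: contraR => kNS; have := fS k; rewrite kNS.
by apply/implyP; apply: contraR => /negbTE fk; apply: fS; rewrite inE fk.
Qed.

Lemma supp_subset_eq0 (f : T -> nat) (S : {set T}) k :
  supp f \subset S -> k \notin S -> f k = 0%N.
Proof. by rewrite -forall_notin_eq0E => /forallP/(_ k)/implyP H /H/eqP. Qed.

Lemma sum_nat_supp (f : T -> nat) : (\sum_(k in supp f) f k)%N = (\sum_k f k)%N.
Proof. by apply: big_rmcond => k; rewrite inE negbK => /eqP. Qed.

Lemma card_supp_leq_sum (f : T -> nat) : (#|supp f| <= \sum_k f k)%N.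
Proof.
rewrite -sum1_card -sum_nat_supp; apply: leq_sum => k.
by rewrite inE lt0n.
Qed.

End NatSupport.

Theorem lemma1 (q r : nat) (x : 'I_q -> Cplx) (hr1 : (1 <= r)%N) (hrq : (r < q)%N) :
  \sum_(S : {set 'I_q} | S != set0)
     (-1) ^+ (#|S|.-1) *
     \sum_(j : {ffun 'I_q -> 'I_r.+1} |
             ((\sum_(k in S) (j k : nat))%N == r) &&
             [forall k, (k \notin S) ==> ((j k : nat) == 0%N)])
        (((2 * r)`!)%:R / (\prod_(k in S) ((2 * j k)`!)%:R)
         * \prod_(k in S) x k ^+ (j k : nat)) = 0.
Proof.
under eq_bigr => S _ do rewrite big_mkcond mulr_sumr.
rewrite exchange_big big1 //= => j _.
pose T := supp (fun k => j k : nat).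
have condE (S : {set 'I_q}) : ((\sum_(k in S) (j k : nat))%N == r) &&
    [forall k, (k \notin S) ==> ((j k : nat) == 0%N)] =
    (T \subset S) && ((\sum_k (j k : nat))%N == r).
  have /= -> := forall_notin_eq0E (fun k => j k : nat) S.
  rewrite andbC; case: (boolP (T \subset S)) => //= TS.
  by rewrite big_rmcond // => k /(supp_subset_eq0 TS).
under eq_bigr => S _ do rewrite condE.
have [sum_r | _] := eqVneq (\sum_k (j k : nat))%N r; last first.
  by rewrite big1 // => S _; rewrite andbF mulr0.
have T_neq0 : T != set0.
  by apply: contraTneq hr1 => T0; rewrite -sum_r -sum_nat_supp -/T T0 big_set0.
have /subsetPn[a _ aNT] : ~~ ([set: 'I_q] \subset T).
  apply: contra (@subset_leq_card _ _ _) _; rewrite cardsT card_ord -ltnNge.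
  by rewrite (leq_ltn_trans (card_supp_leq_sum _)) // sum_r.
pose W : Cplx := ((2 * r)`!)%:R / (\prod_k ((2 * j k)`!)%:R)
                 * \prod_k x k ^+ (j k : nat).
transitivity (\sum_(S : {set 'I_q} | T \subset S) (-1) ^+ #|S|.-1 * W).
  rewrite big_mkcond [RHS]big_mkcond; apply: eq_bigr => S _.
  case: (boolP (T \subset S)) => TS /=; last by rewrite mulr0 if_same.
  have -> : S != set0 by apply: contraNneq T_neq0 => S0; rewrite -subset0 -S0.
  have offS k : k \notin S -> (j k : nat) = 0%N := supp_subset_eq0 TS.
  rewrite /W; congr (_ * (_ / _ * _)); apply: big_rmcond => k /offS ->.
    by rewrite muln0 fact0 mulr1n.
  by rewrite expr0.
by rewrite -mulr_suml (sum_supersets_sign_pred _ aNT T_neq0) mul0r.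
Qed.
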